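(* Let $T\ge K\ge2$, $0<V\le T/K$, and suppose all $N=T/W$ windows have the same size $W$. Let $c=\frac18-\frac{\sqrt{\log(4/3)}}8$. Then for every policy $\pi$: if $W\le K^{1/3}(T/V)^{2/3}$, $R^\pi(T;W,V)\ge\frac c3(KV)^{1/3}T^{2/3}$; and if $W\ge K^{1/3}(T/V)^{2/3}$, $R^\pi(T;W,V)\ge c\,T\sqrt{K/W}$.
   Context: Bandit model: arms $[K]$, horizon $T$; in period $t$ arm $k$ has reward $Y_{t,k}\in[0,1]$ with mean $\mu_{t,k}\in[0,1]$, independent across periods; a (possibly randomized) policy picks $A_t$ using only past actions and observed rewards and observes $Y_{t,A_t}$. $\log$ is natural log. Windows are consecutive blocks $\mathcal W_j$ of $W$ periods partitioning $[T]$; $\mu^*_{\mathcal W_j}=\frac1W\max_k\sum_{t\in\mathcal W_j}\mu_{t,k}$. Regret $R^\pi(T;W,\{\mu\})=\sum_j W\mu^*_{\mathcal W_j}-\mathbb E[\sum_t\mu_{t,A_t}]$, and $R^\pi(T;W,V)$ is its supremum over all mean sequences in $[0,1]^{T\times K}$ with $\sum_{t=1}^{T-1}\max_k|\mu_{t,k}-\mu_{t+1,k}|\le V$ and all reward distributions on $[0,1]$ with those means. *)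

From Stdlib Require Import Reals List.
From Coquelicot Require Import Coquelicot.
Open Scope R_scope.

Fixpoint sumR (n : nat) (f : nat -> R) : R :=
  match n with O => 0 | S m => sumR m f + f m end.

Fixpoint maxK (K : nat) (f : nat -> R) : R :=
  match K with O => 0 | S O => f O | S m => Rmax (maxK m f) (f m) end.

(* Arms are 0..K-1, periods are 1..T.  A mean sequence is mu : period -> arm -> R. *)

(* A finitely supported reward distribution: list of (value, probability). *)
Definition dist := list (R * R)%type.
Definition dist_mass (d : dist) : R := fold_right (fun p s => snd p + s) 0 d.
Definition dist_mean (d : dist) : R := fold_right (fun p s => snd p * fst p + s) 0 d.
Definition dist_ok (d : dist) : Prop :=
  List.Forall (fun p => 0 <= fst p <= 1 /\ 0 <= snd p) d /\ dist_mass d = 1.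

(* Histories: list of (action, observed reward), oldest first. *)
Definition history := list (nat * R)%type.

(* A (possibly randomized) policy: given the period t and the history of past
   actions and observed rewards, a probability distribution over arms. *)
Definition policy := nat -> history -> nat -> R.
Definition is_policy (K : nat) (pol : policy) : Prop :=
  forall t h, (forall a, (a < K)%nat -> 0 <= pol t h a) /\ sumR K (pol t h) = 1.

(* Expected cumulative mean reward over the remaining n periods starting at
   period t with history h: E[ sum mu_{s,A_s} ]. *)
Fixpoint exp_reward (K : nat) (pol : policy) (mu : nat -> nat -> R)
    (nu : nat -> nat -> dist) (n t : nat) (h : history) : R :=
  match n with
  | O => 0
  | S n' =>
      sumR K (fun a => pol t h a *
        (mu t a + fold_right (fun p s =>
            snd p * exp_reward K pol mu nu n' (S t) (h ++ cons (a, fst p) nil) + s)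
          0 (nu t a)))
  end.

Definition env_ok (T K : nat) (mu : nat -> nat -> R) (nu : nat -> nat -> dist) : Prop :=
  forall t k, (1 <= t <= T)%nat -> (k < K)%nat ->
    0 <= mu t k <= 1 /\ dist_ok (nu t k) /\ dist_mean (nu t k) = mu t k.

Definition variation (T K : nat) (mu : nat -> nat -> R) : R :=
  sumR (T - 1) (fun i => maxK K (fun k => Rabs (mu (S i) k - mu (S (S i)) k))).

(* sum_j W * mu*_{W_j} = sum_j max_k sum_{t in W_j} mu_{t,k}, windows
   W_j = {jW+1, ..., (j+1)W}, j = 0..T/W-1. *)
Definition window_benchmark (T K W : nat) (mu : nat -> nat -> R) : R :=
  sumR (T / W) (fun j => maxK K (fun k => sumR W (fun i => mu (j * W + i + 1)%nat k))).

Definition regret (T K W : nat) (pol : policy) (mu : nat -> nat -> R)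
    (nu : nat -> nat -> dist) : R :=
  window_benchmark T K W mu - exp_reward K pol mu nu T 1 nil.

Definition worst_regret (T K W : nat) (V : R) (pol : policy) : Rbar :=
  Lub_Rbar (fun r => exists mu nu, env_ok T K mu nu /\ variation T K mu <= V /\
                       r = regret T K W pol mu nu).

From Pilot Require Import Defs.
From Stdlib Require Import Reals List Lra Lia FunctionalExtensionality.
From Coquelicot Require Import Coquelicot.
Open Scope R_scope.

(* Hard instances: split the horizon into [B] blocks of length [L], a multiple of [W]; in block
   [b] one arm [J b] has mean [1/2 + eps] and all others mean [1/2].  The variation is at most
   [eps] per block boundary, and the window benchmark earns [eps] more than [T / 2] on each of
   the first [B L] periods.  Averaging over all [K ^ B] assignments [J], a change of measure to
   the all-fair environment (Donsker-Varadhan, then Pinsker) bounds the expected number of pulls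
   of the good arm of a block by [L / K + L eps sqrt (4 ln (4/3) L / K)], so for some [J] every
   policy has regret at least [eps B L (1 - sqrt (ln (4/3))) / 2] as soon as [16 eps^2 L <= K].
   Small windows take [L] of order [K^(1/3) (T/V)^(2/3)] and [eps = (K V / T)^(1/3) / 6]; large
   windows take [L = W] and [eps = sqrt (K / W) / 4]. *)

(** * Finite sums *)

Lemma sumR_ext n f g : (forall i, (i < n)%nat -> f i = g i) -> sumR n f = sumR n g.
Proof.
  induction n; intros H; simpl; auto.
  rewrite IHn by (intros; apply H; lia). rewrite H by lia. auto.
Qed.

Lemma sumR_plus n f g : sumR n (fun i => f i + g i) = sumR n f + sumR n g.
Proof. induction n; simpl; [lra|]. rewrite IHn; lra. Qed.

Lemma sumR_scal n c f : sumR n (fun i => c * f i) = c * sumR n f.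
Proof. induction n; simpl; [lra|]. rewrite IHn; lra. Qed.

Lemma sumR_le n f g : (forall i, (i < n)%nat -> f i <= g i) -> sumR n f <= sumR n g.
Proof.
  induction n; intros H; simpl; [lra|].
  apply Rplus_le_compat; [apply IHn; intros; apply H|apply H]; lia.
Qed.

Lemma sumR_const n c : sumR n (fun _ => c) = INR n * c.
Proof. induction n; simpl sumR; [simpl; lra|]. rewrite IHn, S_INR; lra. Qed.

Lemma sumR_nonneg n f : (forall i, (i < n)%nat -> 0 <= f i) -> 0 <= sumR n f.
Proof. intros H. rewrite <- (Rmult_0_r (INR n)), <- sumR_const. apply sumR_le; auto. Qed.

Lemma sumR_pos n f : (forall i, (i < n)%nat -> 0 <= f i) ->
  (exists i, (i < n)%nat /\ 0 < f i) -> 0 < sumR n f.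
Proof.
  induction n; intros H [i [Hi Hf]]; [lia|]. simpl.
  assert (0 <= f n) by (apply H; lia).
  destruct (Nat.eq_dec i n) as [->|Hin].
  - assert (0 <= sumR n f) by (apply sumR_nonneg; intros; apply H; lia). lra.
  - assert (0 < sumR n f) by (apply IHn; [intros; apply H; lia|exists i; split; [lia|auto]]). lra.
Qed.

Lemma sumR_eq_1_exists_pos n f : sumR n f = 1 -> exists i, (i < n)%nat /\ 0 < f i.
Proof.
  intros H. apply Classical_Prop.NNPP. intros Hn.
  assert (Hle : sumR n f <= sumR n (fun _ => 0)).
  { apply sumR_le. intros i Hi. apply Rnot_lt_le. intros Hfi. apply Hn; eauto. }
  rewrite sumR_const in Hle. lra.
Qed.

Lemma sumR_telescope n (g : nat -> R) : sumR n (fun i => g (S i) - g i) = g n - g 0%nat.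
Proof. induction n; simpl; [ring|]. rewrite IHn. ring. Qed.

Lemma sumR_sel n x (f : nat -> R) :
  sumR n (fun i => if Nat.eqb x i then f i else 0) = if Nat.ltb x n then f x else 0.
Proof.
  induction n; simpl; [destruct (Nat.ltb_spec x 0); [lia|auto]|].
  rewrite IHn. destruct (Nat.ltb_spec x n), (Nat.eqb_spec x n), (Nat.ltb_spec x (S n));
    subst; try lia; ring.
Qed.

Lemma INR_sumR_ltb n x : (x <= n)%nat -> INR x = sumR n (fun k => if Nat.ltb k x then 1 else 0).
Proof.
  revert x; induction n; intros x Hx; [replace x with 0%nat by lia; reflexivity|].
  cbn [sumR]. destruct (Nat.ltb_spec n x).
  - replace x with (S n) by lia. rewrite S_INR, (IHn n) by lia. f_equal.
    apply sumR_ext. intros k Hk. destruct (Nat.ltb_spec k n), (Nat.ltb_spec k (S n)); lia || reflexivity.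
  - rewrite <- IHn by lia. ring.
Qed.

Lemma sumR_sqr_le n y : (sumR n y) ^ 2 <= INR n * sumR n (fun i => y i ^ 2).
Proof.
  induction n; [simpl; lra|]. cbn [sumR]. rewrite S_INR.
  assert (2 * sumR n y * y n <= sumR n (fun i => y i ^ 2) + INR n * y n ^ 2).
  { rewrite <- sumR_const, <- sumR_plus.
    replace (2 * sumR n y * y n) with (sumR n (fun i => 2 * y n * y i)) by (rewrite sumR_scal; ring).
    apply sumR_le. intros i _. pose proof (pow2_ge_0 (y i - y n)). nra. }
  nra.
Qed.

Lemma sumR_sqrt_le n x : (forall i, (i < n)%nat -> 0 <= x i) ->
  sumR n (fun i => sqrt (x i)) <= sqrt (INR n * sumR n x).
Proof.
  intros Hx. rewrite <- (sqrt_pow2 (sumR n (fun i => sqrt (x i))))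
    by (apply sumR_nonneg; intros; apply sqrt_pos).
  apply sqrt_le_1_alt. eapply Rle_trans; [apply sumR_sqr_le|].
  right. f_equal. apply sumR_ext. intros. rewrite <- Rsqr_pow2, Rsqr_sqrt; auto.
Qed.

Lemma exists_le_mean K f : (1 <= K)%nat -> exists j, (j < K)%nat /\ INR K * f j <= sumR K f.
Proof.
  intros HK. apply Classical_Prop.NNPP. intros Hn.
  assert (Hlt : forall j, (j < K)%nat -> 0 < INR K * f j - sumR K f).
  { intros j Hj. apply Rnot_le_lt. intros Hj'. apply Hn. exists j. split; [lia|lra]. }
  assert (Hpos : 0 < sumR K (fun j => INR K * f j + (-1) * sumR K f)).
  { apply sumR_pos; [intros j Hj; specialize (Hlt j Hj); lra|].
    exists 0%nat. split; [lia|]. specialize (Hlt 0%nat HK). lra. }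
  rewrite sumR_plus, sumR_scal, sumR_const in Hpos. lra.
Qed.

Lemma maxK_ge K f k : (k < K)%nat -> f k <= maxK K f.
Proof.
  induction K; intros Hk; [lia|]. destruct K; [replace k with 0%nat by lia; simpl; lra|].
  change (maxK (S (S K)) f) with (Rmax (maxK (S K) f) (f (S K))).
  destruct (Nat.eq_dec k (S K)) as [->|]; [apply Rmax_r|].
  eapply Rle_trans; [apply IHK; lia|apply Rmax_l].
Qed.

Lemma maxK_le K f c : (1 <= K)%nat -> (forall k, (k < K)%nat -> f k <= c) -> maxK K f <= c.
Proof.
  induction K; intros HK H; [lia|]. destruct K; [simpl; apply H; lia|].
  change (maxK (S (S K)) f) with (Rmax (maxK (S K) f) (f (S K))).
  apply Rmax_lub; [apply IHK|apply H]; intros; try apply H; lia.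
Qed.

(** * Bernoulli environments *)

Definition indic (j a : nat) : R := if Nat.eqb a j then 1 else 0.

Lemma indic_01 j a : indic j a = 0 \/ indic j a = 1.
Proof. unfold indic; destruct (Nat.eqb a j); auto. Qed.

Lemma sumR_indic K a : (a < K)%nat -> sumR K (fun j => indic j a) = 1.
Proof.
  intros Ha. unfold indic. rewrite sumR_sel. destruct (Nat.ltb_spec a K); [reflexivity|lia].
Qed.

Definition pulls (j : nat) (h : history) : nat :=
  fold_right (fun x s => ((if Nat.eqb (fst x) j then 1 else 0) + s)%nat) 0%nat h.

Lemma pulls_app j h1 h2 : pulls j (h1 ++ h2) = (pulls j h1 + pulls j h2)%nat.
Proof. induction h1; simpl; auto. rewrite IHh1; lia. Qed.

Lemma pulls_le_length j s : (pulls j s <= length s)%nat.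
Proof. induction s; simpl; auto. destruct (Nat.eqb (fst a) j); lia. Qed.

Definition pulls_gt (j c k : nat) (t : nat) (h : history) : R :=
  if Nat.ltb (c + k) (pulls j h) then 1 else 0.

Definition bern_dist (q : R) : Defs.dist := cons (1, q) (cons (0, 1 - q) nil).

Section BernoulliTree.

Variables (K : nat) (pol : policy).

(* Expectation, when arm [a] pays a Bernoulli([p t' a]) reward at period [t'], of the running
   reward [r t' A_t'] summed over the [n] periods from [t] on, plus the payoff [F] at the period
   and history reached after them.  The [+ 0] mirrors the [fold_right] of [exp_reward]. *)
Fixpoint bern_expect (p r : nat -> nat -> R) (F : nat -> history -> R)
    (n t : nat) (h : history) : R :=
  match n with
  | O => F t h
  | S n' => sumR K (fun a => pol t h a *
      (r t a + (p t a * bern_expect p r F n' (S t) (h ++ cons (a, 1) nil) +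
               ((1 - p t a) * bern_expect p r F n' (S t) (h ++ cons (a, 0) nil) + 0))))
  end.

Lemma exp_reward_bern p mu n t h :
  exp_reward K pol mu (fun t a => bern_dist (p t a)) n t h =
  bern_expect p mu (fun _ _ => 0) n t h.
Proof.
  revert t h; induction n; intros t h; simpl; auto.
  apply sumR_ext; intros a _. rewrite !IHn. reflexivity.
Qed.

Lemma bern_expect_lin p r1 r2 F1 F2 x y n t h :
  bern_expect p (fun t a => x * r1 t a + y * r2 t a) (fun t h => x * F1 t h + y * F2 t h) n t h
  = x * bern_expect p r1 F1 n t h + y * bern_expect p r2 F2 n t h.
Proof.
  revert t h; induction n; intros t h; simpl; auto.
  rewrite <- !sumR_scal, <- sumR_plus. apply sumR_ext; intros a _. rewrite !IHn. ring.
Qed.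

Lemma bern_expect_ext_range p1 p2 r1 r2 F1 F2 n t h :
  (forall t' a, (t <= t' < t + n)%nat -> (a < K)%nat -> p1 t' a = p2 t' a /\ r1 t' a = r2 t' a) ->
  (forall s, length s = n -> F1 (t + n)%nat (h ++ s) = F2 (t + n)%nat (h ++ s)) ->
  bern_expect p1 r1 F1 n t h = bern_expect p2 r2 F2 n t h.
Proof.
  revert t h; induction n; intros t h Hr HF; simpl.
  { specialize (HF nil eq_refl). rewrite Nat.add_0_r, app_nil_r in HF. auto. }
  apply sumR_ext; intros a Ha. destruct (Hr t a ltac:(lia) Ha) as [-> ->].
  rewrite (IHn (S t) (h ++ cons (a, 1) nil)), (IHn (S t) (h ++ cons (a, 0) nil)); auto;
    try (intros; apply Hr; auto; lia);
    intros s Hs; replace (S t + n)%nat with (t + S n)%nat by lia;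
    rewrite <- app_assoc; apply HF; simpl; lia.
Qed.

Lemma bern_expect_ext p r1 r2 F1 F2 n t h :
  (forall t' a, (a < K)%nat -> r1 t' a = r2 t' a) -> (forall t' h', F1 t' h' = F2 t' h') ->
  bern_expect p r1 F1 n t h = bern_expect p r2 F2 n t h.
Proof. intros. apply bern_expect_ext_range; auto. Qed.

Lemma bern_expect_split p r F n1 n2 t h :
  bern_expect p r F (n1 + n2) t h =
  bern_expect p r (fun t' h' => bern_expect p r F n2 t' h') n1 t h.
Proof.
  revert t h; induction n1; intros t h; simpl; auto.
  apply sumR_ext; intros a _. rewrite !IHn1. reflexivity.
Qed.

Lemma bern_expect_zero p n t h : bern_expect p (fun _ _ => 0) (fun _ _ => 0) n t h = 0.
Proof.
  revert t h; induction n; intros t h; simpl; auto.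
  rewrite (sumR_ext _ _ (fun _ => 0 * 0)) by (intros; rewrite !IHn; ring).
  rewrite sumR_scal. ring.
Qed.

Lemma bern_expect_sum p m (r : nat -> nat -> nat -> R) (F : nat -> nat -> history -> R) n t h :
  bern_expect p (fun t a => sumR m (fun i => r i t a)) (fun t h => sumR m (fun i => F i t h)) n t h
  = sumR m (fun i => bern_expect p (r i) (F i) n t h).
Proof.
  induction m; simpl; [apply bern_expect_zero|].
  rewrite <- IHm, <- (Rmult_1_l (bern_expect p (fun t0 a => sumR m _) _ _ _ _)),
    <- (Rmult_1_l (bern_expect p (r m) _ _ _ _)), <- bern_expect_lin.
  apply bern_expect_ext; intros; ring.
Qed.

Hypothesis Hpol : is_policy K pol.

Lemma bern_expect_const p c d n t h :
  bern_expect p (fun _ _ => c) (fun _ _ => d) n t h = INR n * c + d.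
Proof.
  revert t h; induction n; intros t h; simpl bern_expect; [simpl; lra|].
  rewrite (sumR_ext _ _ (fun a => (c + (INR n * c + d)) * pol t h a)) by (intros; rewrite !IHn; ring).
  rewrite sumR_scal, (proj2 (Hpol t h)), S_INR. ring.
Qed.

Lemma bern_expect_affine p F x y n t h :
  bern_expect p (fun _ _ => 0) (fun t h => x * F t h + y) n t h =
  x * bern_expect p (fun _ _ => 0) F n t h + y.
Proof.
  rewrite (bern_expect_ext p _ (fun t a => x * 0 + 1 * 0) _ (fun t h => x * F t h + 1 * y))
    by (intros; ring).
  rewrite bern_expect_lin, bern_expect_const. ring.
Qed.

Lemma bern_expect_mono p r1 r2 F1 F2 n t h : (forall t a, 0 <= p t a <= 1) ->
  (forall t' a, (a < K)%nat -> r1 t' a <= r2 t' a) ->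
  (forall s, length s = n -> F1 (t + n)%nat (h ++ s) <= F2 (t + n)%nat (h ++ s)) ->
  bern_expect p r1 F1 n t h <= bern_expect p r2 F2 n t h.
Proof.
  intros Hp Hr. revert t h; induction n; intros t h HF; simpl.
  { specialize (HF nil eq_refl). rewrite Nat.add_0_r, app_nil_r in HF. auto. }
  apply sumR_le; intros a Ha. apply Rmult_le_compat_l; [apply (proj1 (Hpol t h)); auto|].
  assert (Hleaf : forall x, bern_expect p r1 F1 n (S t) (h ++ cons (a, x) nil) <=
                            bern_expect p r2 F2 n (S t) (h ++ cons (a, x) nil)).
  { intros x. apply IHn. intros s Hs. replace (S t + n)%nat with (t + S n)%nat by lia.
    rewrite <- app_assoc. apply HF. simpl. lia. }
  pose proof (Hleaf 1). pose proof (Hleaf 0). pose proof (Hr t a Ha). specialize (Hp t a).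
  nra.
Qed.

Lemma bern_expect_nonneg p r F n t h : (forall t a, 0 <= p t a <= 1) ->
  (forall t a, 0 <= r t a) -> (forall t h, 0 <= F t h) -> 0 <= bern_expect p r F n t h.
Proof. intros. rewrite <- (bern_expect_zero p n t h). apply bern_expect_mono; auto. Qed.

Lemma bern_expect_unit p F n t h : (forall t a, 0 <= p t a <= 1) ->
  (forall t h, 0 <= F t h <= 1) -> 0 <= bern_expect p (fun _ _ => 0) F n t h <= 1.
Proof.
  intros Hp HF. split.
  - apply bern_expect_nonneg; auto; intros; [lra|apply HF].
  - rewrite <- (Rplus_0_l 1), <- (Rmult_0_r (INR n)),
      <- bern_expect_const with (p := p) (t := t) (h := h).
    apply bern_expect_mono; auto; intros; [lra|apply HF].
Qed.

Lemma bern_expect_pos p r F n t h : (forall t a, 0 <= p t a <= 1) ->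
  (forall t a, 0 <= r t a) -> (forall t h, 0 < F t h) -> 0 < bern_expect p r F n t h.
Proof.
  intros Hp Hr HF. revert t h; induction n; intros t h; simpl; auto.
  destruct (sumR_eq_1_exists_pos _ _ (proj2 (Hpol t h))) as [a0 [Ha0 Hpa0]].
  assert (Hbranch : forall a, 0 < r t a + (p t a * bern_expect p r F n (S t) (h ++ cons (a, 1) nil) +
    ((1 - p t a) * bern_expect p r F n (S t) (h ++ cons (a, 0) nil) + 0))).
  { intros a. pose proof (IHn (S t) (h ++ cons (a, 1) nil)).
    pose proof (IHn (S t) (h ++ cons (a, 0) nil)). pose proof (Hr t a). destruct (Hp t a). nra. }
  apply sumR_pos.
  - intros a Ha. apply Rmult_le_pos; [apply (proj1 (Hpol t h)); auto|left; auto].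
  - exists a0. split; auto. apply Rmult_lt_0_compat; auto.
Qed.

Lemma bern_expect_pulls p j n t h :
  bern_expect p (fun _ a => indic j a) (fun _ _ => 0) n t h + INR (pulls j h) =
  bern_expect p (fun _ _ => 0) (fun _ h' => INR (pulls j h')) n t h.
Proof.
  revert t h; induction n; intros t h; simpl bern_expect; [lra|].
  replace (INR (pulls j h)) with (INR (pulls j h) * sumR K (pol t h))
    by (rewrite (proj2 (Hpol t h)); ring).
  rewrite <- sumR_scal, <- sumR_plus. apply sumR_ext; intros a _.
  rewrite <- (IHn (S t) (h ++ cons (a, 1) nil)), <- (IHn (S t) (h ++ cons (a, 0) nil)), !pulls_app.
  simpl. unfold indic. rewrite plus_INR. destruct (Nat.eqb a j); simpl; ring.
Qed.

(* Layer-cake decomposition of the expected number of pulls. *)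
Lemma bern_expect_pulls_layers p j n t h :
  bern_expect p (fun _ a => indic j a) (fun _ _ => 0) n t h =
  sumR n (fun k => bern_expect p (fun _ _ => 0) (pulls_gt j (pulls j h) k) n t h).
Proof.
  assert (Hlayers : bern_expect p (fun _ _ => 0) (fun _ h' => INR (pulls j h')) n t h =
    bern_expect p (fun t a => 1 * 0 + 1 * sumR n (fun k => 0))
      (fun t h' => 1 * INR (pulls j h) + 1 * sumR n (fun k => pulls_gt j (pulls j h) k t h')) n t h).
  { apply bern_expect_ext_range.
    - intros. rewrite sumR_const. split; ring.
    - intros s Hs. rewrite pulls_app, plus_INR, (INR_sumR_ltb n (pulls j s))
        by (rewrite <- Hs; apply pulls_le_length).
      rewrite !Rmult_1_l. f_equal. apply sumR_ext; intros k _. unfold pulls_gt. rewrite pulls_app.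
      destruct (Nat.ltb_spec k (pulls j s)), (Nat.ltb_spec (pulls j h + k) (pulls j h + pulls j s));
        auto; lia. }
  pose proof (bern_expect_pulls p j n t h) as Hpulls.
  rewrite Hlayers, bern_expect_lin, bern_expect_const, bern_expect_sum in Hpulls. lra.
Qed.

End BernoulliTree.

(** * Change of measure *)

Lemma ln_le_sub_1 x : 0 < x -> ln x <= x - 1.
Proof.
  intros Hx. destruct (Req_dec (ln x) 0) as [E|E].
  - rewrite E. assert (x = 1) by (rewrite <- (exp_ln x Hx), E, exp_0; auto). lra.
  - pose proof (exp_ineq1 _ E) as Hexp. rewrite exp_ln in Hexp by auto. lra.
Qed.

Lemma ln_le_tangent y S : 0 < y -> 0 < S -> ln y <= ln S + y / S - 1.
Proof.
  intros Hy HS. pose proof (ln_le_sub_1 (y / S) ltac:(apply Rdiv_lt_0_compat; auto)) as Hln.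
  rewrite ln_div in Hln by auto. lra.
Qed.

Definition kl_bern (a b : R) : R := a * ln (a / b) + (1 - a) * ln ((1 - a) / (1 - b)).

(* One step of the Donsker-Varadhan inequality: [ln y <= ln S + y / S - 1] applied to both
   outcomes [y = q1 Z1 / q0] and [y = (1 - q1) Z0 / (1 - q0)]. *)
Lemma kl_bern_step q0 q1 I1 I0 Z1 Z0 S : 0 < q0 < 1 -> 0 < q1 < 1 -> 0 < Z1 -> 0 < Z0 -> 0 < S ->
  I1 <= ln Z1 -> I0 <= ln Z0 ->
  q0 * I1 + (1 - q0) * I0 - kl_bern q0 q1 <= ln S - 1 + (q1 * Z1 + (1 - q1) * Z0) / S.
Proof.
  intros Hq0 Hq1 HZ1 HZ0 HS HI1 HI0. unfold kl_bern.
  pose proof (ln_le_tangent (q1 * Z1 / q0) S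
    ltac:(apply Rdiv_lt_0_compat; [apply Rmult_lt_0_compat|]; lra) HS) as L1.
  pose proof (ln_le_tangent ((1 - q1) * Z0 / (1 - q0)) S
    ltac:(apply Rdiv_lt_0_compat; [apply Rmult_lt_0_compat|]; lra) HS) as L0.
  rewrite ln_div, ln_mult in L1, L0 by (try apply Rmult_lt_0_compat; lra).
  rewrite (ln_div q0), (ln_div (1 - q0)) by lra.
  replace ((q1 * Z1 + (1 - q1) * Z0) / S) with
    (q0 * (q1 * Z1 / q0 / S) + (1 - q0) * ((1 - q1) * Z0 / (1 - q0) / S)) by (field; lra).
  pose proof (Rmult_le_compat_l q0 _ _ ltac:(lra) L1).
  pose proof (Rmult_le_compat_l q0 _ _ ltac:(lra) HI1).
  pose proof (Rmult_le_compat_l (1 - q0) _ _ ltac:(lra) L0).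
  pose proof (Rmult_le_compat_l (1 - q0) _ _ ltac:(lra) HI0).
  lra.
Qed.

Lemma pinsker_bern a b : 0 <= a -> a < b -> b < 1 -> 2 * (b - a) ^ 2 <= kl_bern a b.
Proof.
  intros Ha Hab Hb. unfold kl_bern. destruct (Req_dec a 0) as [->|Ha0].
  - set (f := fun x => - ln (1 - x) - 2 * x ^ 2).
    assert (D : forall x, 0 <= x <= b -> derivable_pt_lim f x (1 / (1 - x) - 4 * x)).
    { intros x Hx. apply is_derive_Reals. unfold f. auto_derive; [lra|field; lra]. }
    destruct (MVT_cor2 f (fun x => 1 / (1 - x) - 4 * x) 0 b Hab D) as [c [Hc Hc2]].
    assert (0 <= 1 / (1 - c) - 4 * c).
    { replace (1 / (1 - c) - 4 * c) with ((1 - 2 * c) ^ 2 / (1 - c)) by (field; lra).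
      apply Rdiv_le_0_compat; [apply pow2_ge_0|lra]. }
    unfold f in Hc. rewrite Rminus_0_r, ln_1 in Hc.
    replace ((1 - 0) / (1 - b)) with (/ (1 - b)) by (field; lra). rewrite ln_Rinv by lra.
    assert (0 <= (1 / (1 - c) - 4 * c) * (b - 0)) by (apply Rmult_le_pos; lra). nra.
  - set (f := fun x => a * ln (a / x) + (1 - a) * ln ((1 - a) / (1 - x)) - 2 * (x - a) ^ 2).
    assert (D : forall x, a <= x <= b ->
      derivable_pt_lim f x (- a / x + (1 - a) / (1 - x) - 4 * (x - a))).
    { intros x Hx. apply is_derive_Reals. unfold f. auto_derive.
      - repeat split; try lra; apply Rmult_lt_0_compat; try lra; apply Rinv_0_lt_compat; lra.
      - field. repeat split; lra. }
    destruct (MVT_cor2 f _ a b Hab D) as [c [Hc Hc2]].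
    assert (0 <= - a / c + (1 - a) / (1 - c) - 4 * (c - a)).
    { replace (- a / c + (1 - a) / (1 - c) - 4 * (c - a))
        with ((c - a) * (1 - 2 * c) ^ 2 / (c * (1 - c))) by (field; lra).
      apply Rdiv_le_0_compat; [apply Rmult_le_pos; [lra|apply pow2_ge_0]|apply Rmult_lt_0_compat; lra]. }
    unfold f in Hc. rewrite !Rdiv_diag, ln_1 in Hc by lra. nra.
Qed.

(* If every two-point test function satisfies the Donsker-Varadhan bound with budget [D], then
   KL(Ber(a) || Ber(b)) <= D (take [exp al = a / b], [exp be = (1 - a) / (1 - b)]), and Pinsker
   bounds [b - a]. *)
Lemma pinsker_variational a b D : 0 <= a <= 1 -> 0 <= b <= 1 ->
  (forall al be, al * a + be * (1 - a) - D <= ln (exp al * b + exp be * (1 - b))) ->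
  b - a <= sqrt (D / 2).
Proof.
  intros Ha Hb Hdv. destruct (Rle_dec b a); [pose proof (sqrt_pos (D / 2)); lra|].
  assert (Hb1 : b < 1).
  { destruct (Req_dec b 1) as [->|]; [|lra]. exfalso.
    specialize (Hdv 0 ((D + 1) / (1 - a))). rewrite exp_0, Rminus_diag, Rmult_0_r, Rplus_0_r,
      Rmult_1_l, ln_1 in Hdv.
    replace ((D + 1) / (1 - a) * (1 - a)) with (D + 1) in Hdv by (field; lra). lra. }
  assert (Hkl : kl_bern a b <= D).
  { unfold kl_bern. destruct (Req_dec a 0) as [->|Ha0].
    - rewrite Rmult_0_l, Rplus_0_l, Rminus_0_r, Rmult_1_l.
      apply Rnot_lt_le. intros Hlt.
      set (dl := ln (1 / (1 - b)) - D). assert (Hd : 0 < dl) by (unfold dl; lra).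
      pose proof (exp_ineq1 dl ltac:(lra)).
      specialize (Hdv (ln ((exp dl - 1) / (2 * b))) (ln (1 / (1 - b)))).
      rewrite !exp_ln in Hdv by (apply Rdiv_lt_0_compat; lra).
      replace ((exp dl - 1) / (2 * b) * b + 1 / (1 - b) * (1 - b)) with ((exp dl + 1) / 2) in Hdv
        by (field; lra).
      assert (Hmid : ln ((exp dl + 1) / 2) < ln (exp dl)) by (apply ln_increasing; lra).
      rewrite ln_exp in Hmid. unfold dl in Hdv, Hmid. lra.
    - specialize (Hdv (ln (a / b)) (ln ((1 - a) / (1 - b)))).
      rewrite !exp_ln in Hdv by (apply Rdiv_lt_0_compat; lra).
      replace (a / b * b + (1 - a) / (1 - b) * (1 - b)) with 1 in Hdv by (field; lra).
      rewrite ln_1 in Hdv. lra. }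
  pose proof (pinsker_bern a b ltac:(lra) ltac:(lra) Hb1).
  rewrite <- (sqrt_pow2 (b - a)) by lra. apply sqrt_le_1_alt. lra.
Qed.

(* The chord of the convex function [-ln (1 - x)] on [0, 1/4]. *)
Lemma ln_1_sub_le_chord x : 0 <= x <= 1/4 -> - ln (1 - x) <= 4 * ln (4/3) * x.
Proof.
  intros Hx. set (psi := fun x => 4 * ln (4/3) * x + ln (1 - x)).
  assert (D : forall y, y < 1 -> derivable_pt_lim psi y (4 * ln (4/3) - 1 / (1 - y))).
  { intros y Hy. apply is_derive_Reals. unfold psi. auto_derive; [lra|field; lra]. }
  assert (P0 : psi 0 = 0) by (unfold psi; rewrite Rminus_0_r, ln_1; ring).
  assert (P1 : psi (1/4) = 0).
  { unfold psi. replace (1 - 1/4) with (/ (4/3)) by field. rewrite ln_Rinv by lra. field. }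
  assert (Hpsi : psi x >= 0).
  { destruct (Req_dec x 0) as [->|]; [lra|]. destruct (Req_dec x (1/4)) as [->|]; [lra|].
    destruct (Rle_dec 0 (4 * ln (4/3) - 1 / (1 - x))).
    - destruct (MVT_cor2 psi _ 0 x ltac:(lra) ltac:(intros; apply D; lra)) as [c [Hc Hc2]].
      assert (1 / (1 - c) <= 1 / (1 - x))
        by (apply Rmult_le_compat_l; [lra|apply Rinv_le_contravar; lra]).
      nra.
    - destruct (MVT_cor2 psi _ x (1/4) ltac:(lra) ltac:(intros; apply D; lra)) as [c [Hc Hc2]].
      assert (1 / (1 - x) <= 1 / (1 - c))
        by (apply Rmult_le_compat_l; [lra|apply Rinv_le_contravar; lra]).
      nra. }
  unfold psi in Hpsi. lra.
Qed.

Lemma ln_4_3_pos : 0 < ln (4/3).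
Proof. rewrite <- ln_1. apply ln_increasing; lra. Qed.

Lemma sqrt_ln_4_3_le_1 : sqrt (ln (4/3)) <= 1.
Proof.
  rewrite <- sqrt_1. apply sqrt_le_1_alt.
  apply Rle_trans with (ln (exp 1)); [apply ln_le; [lra|]|rewrite ln_exp; lra].
  pose proof (exp_ineq1 1 ltac:(lra)). lra.
Qed.

Section ChangeOfMeasure.

Variables (K : nat) (pol : policy).
Hypothesis Hpol : is_policy K pol.

(* Donsker-Varadhan: E_0[g] - KL(P_0 || P_1) <= ln E_1[exp g] for the laws P_0, P_1 of the
   history under the two Bernoulli environments; the divergence of the histories is the
   expected sum of the per-period divergences of the pulled arms. *)
Lemma bern_expect_change_of_measure p0 p1 g n t h :
  (forall t a, 0 < p0 t a < 1) -> (forall t a, 0 < p1 t a < 1) ->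
  bern_expect K pol p0 (fun _ _ => 0) g n t h -
  bern_expect K pol p0 (fun t a => kl_bern (p0 t a) (p1 t a)) (fun _ _ => 0) n t h
  <= ln (bern_expect K pol p1 (fun _ _ => 0) (fun t h => exp (g t h)) n t h).
Proof.
  intros Hp0 Hp1. revert t h; induction n; intros t h; [simpl; rewrite ln_exp; lra|].
  assert (Hp1' : forall t a, 0 <= p1 t a <= 1) by (intros t' a; specialize (Hp1 t' a); lra).
  set (Z := fun x a => bern_expect K pol p1 (fun _ _ => 0) (fun t h => exp (g t h)) n (S t)
                         (h ++ cons (a, x) nil)).
  assert (HZ : forall x a, 0 < Z x a)
    by (intros; apply bern_expect_pos; auto; intros; [lra|apply exp_pos]).
  set (Ztot := bern_expect K pol p1 (fun _ _ => 0) (fun t h => exp (g t h)) (S n) t h).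
  assert (HS : 0 < Ztot) by (apply bern_expect_pos; auto; intros; [lra|apply exp_pos]).
  assert (HSdef : Ztot =
    sumR K (fun a => pol t h a * (0 + (p1 t a * Z 1 a + ((1 - p1 t a) * Z 0 a + 0)))))
    by reflexivity.
  apply Rle_trans with
    (sumR K (fun a => pol t h a * (ln Ztot - 1 + (p1 t a * Z 1 a + (1 - p1 t a) * Z 0 a) / Ztot))).
  - simpl bern_expect.
    match goal with |- sumR K ?f - sumR K ?g <= _ =>
      replace (sumR K f - sumR K g) with (sumR K (fun a => f a + (-1) * g a))
        by (rewrite sumR_plus, sumR_scal; ring) end.
    apply sumR_le; intros a Ha.
    pose proof (kl_bern_step (p0 t a) (p1 t a) _ _ _ _ Ztot (Hp0 t a) (Hp1 t a) (HZ 1 a) (HZ 0 a) HS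
      (IHn (S t) (h ++ cons (a, 1) nil)) (IHn (S t) (h ++ cons (a, 0) nil))) as Hstep.
    pose proof (proj1 (Hpol t h) a Ha) as Hpa.
    pose proof (Rmult_le_compat_l _ _ _ Hpa Hstep). unfold Z in *. lra.
  - rewrite (sumR_ext _ _ (fun a => (ln Ztot - 1) * pol t h a +
        / Ztot * (pol t h a * (0 + (p1 t a * Z 1 a + ((1 - p1 t a) * Z 0 a + 0))))))
      by (intros; field; lra).
    rewrite sumR_plus, !sumR_scal, <- HSdef, (proj2 (Hpol t h)). right. field. lra.
Qed.

End ChangeOfMeasure.

Definition fair_means : nat -> nat -> R := fun _ _ => 1/2.
Definition bump_means (eps : R) (j : nat) : nat -> nat -> R := fun _ a => 1/2 + eps * indic j a.

(* KL(Ber(1/2) || Ber(1/2 + eps)) *)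
Definition kl_fair (eps : R) : R := - (1/2) * ln (1 - 4 * eps ^ 2).

Lemma kl_bern_fair_bump eps j t a : 0 <= eps <= 1/4 ->
  kl_bern (fair_means t a) (bump_means eps j t a) = kl_fair eps * indic j a.
Proof.
  intros He. unfold kl_bern, fair_means, bump_means, kl_fair.
  destruct (indic_01 j a) as [-> | ->].
  - rewrite Rmult_0_r, Rplus_0_r, !Rdiv_diag, ln_1 by lra. ring.
  - replace (1 / 2 / (1 / 2 + eps * 1)) with (/ (1 + 2 * eps)) by (field; lra).
    replace ((1 - 1 / 2) / (1 - (1 / 2 + eps * 1))) with (/ (1 - 2 * eps)) by (field; lra).
    rewrite !ln_Rinv by lra. replace (1 - 4 * eps ^ 2) with ((1 + 2 * eps) * (1 - 2 * eps)) by ring.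
    rewrite ln_mult by lra. field.
Qed.

Lemma kl_fair_nonneg eps : 0 <= eps <= 1/4 -> 0 <= kl_fair eps.
Proof.
  intros He. unfold kl_fair. assert (ln (1 - 4 * eps ^ 2) <= 0) by (rewrite <- ln_1; apply ln_le; nra).
  lra.
Qed.

Lemma kl_fair_le eps : 0 <= eps <= 1/4 -> kl_fair eps <= 8 * ln (4/3) * eps ^ 2.
Proof.
  intros He. unfold kl_fair. pose proof (ln_1_sub_le_chord (4 * eps ^ 2) ltac:(split; nra)). lra.
Qed.

Section BumpedArm.

Variables (K : nat) (pol : policy).
Hypothesis Hpol : is_policy K pol.
Variable eps : R.
Hypothesis Heps : 0 <= eps <= 1/4.

Let fair_pulls j L t h := bern_expect K pol fair_means (fun _ a => indic j a) (fun _ _ => 0) L t h.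

Lemma bern_expect_bump_test_le j F L t h : (forall t h, F t h = 0 \/ F t h = 1) ->
  bern_expect K pol (bump_means eps j) (fun _ _ => 0) F L t h -
  bern_expect K pol fair_means (fun _ _ => 0) F L t h <= sqrt (kl_fair eps * fair_pulls j L t h / 2).
Proof.
  intros HF.
  assert (Hfair : forall t a, 0 < fair_means t a < 1) by (intros; unfold fair_means; lra).
  assert (Hbump : forall t a, 0 < bump_means eps j t a < 1)
    by (intros; unfold bump_means; destruct (indic_01 j a) as [-> | ->]; lra).
  assert (HF01 : forall t h, 0 <= F t h <= 1) by (intros t' h'; destruct (HF t' h') as [-> | ->]; lra).
  apply pinsker_variational;
    [apply bern_expect_unit; auto; intros t' a; specialize (Hfair t' a); lra
    |apply bern_expect_unit; auto; intros t' a; specialize (Hbump t' a); lra|].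
  intros al be.
  pose proof (bern_expect_change_of_measure K pol Hpol fair_means (bump_means eps j)
    (fun t h => (al - be) * F t h + be) L t h Hfair Hbump) as Hdv.
  assert (Hexp : bern_expect K pol (bump_means eps j) (fun _ _ => 0)
      (fun t h => exp ((al - be) * F t h + be)) L t h =
    bern_expect K pol (bump_means eps j) (fun _ _ => 0)
      (fun t h => (exp al - exp be) * F t h + exp be) L t h).
  { apply bern_expect_ext; [reflexivity|]. intros t' h'.
    destruct (HF t' h') as [-> | ->]; [rewrite !Rmult_0_r, !Rplus_0_l; ring|].
    rewrite !Rmult_1_r. replace (al - be + be) with al by ring. ring. }
  assert (Hkl : bern_expect K pol fair_means (fun t a => kl_bern (fair_means t a) (bump_means eps j t a))
      (fun _ _ => 0) L t h = kl_fair eps * fair_pulls j L t h).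
  { rewrite (bern_expect_ext K pol fair_means _ (fun t a => kl_fair eps * indic j a + 0 * 0) _
      (fun t h => kl_fair eps * 0 + 0 * 0))
      by (intros; try rewrite kl_bern_fair_bump by auto; ring).
    rewrite bern_expect_lin, bern_expect_zero. unfold fair_pulls. ring. }
  cbv beta in Hdv. rewrite Hexp, Hkl, !bern_expect_affine in Hdv by auto.
  match goal with |- _ <= ln ?X => replace X with
    ((exp al - exp be) * bern_expect K pol (bump_means eps j) (fun _ _ => 0) F L t h + exp be)
    by ring end.
  lra.
Qed.

Lemma bern_expect_bump_pulls_le j L t h :
  bern_expect K pol (bump_means eps j) (fun _ a => indic j a) (fun _ _ => 0) L t h <=
  fair_pulls j L t h + INR L * sqrt (kl_fair eps * fair_pulls j L t h / 2).
Proof.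
  unfold fair_pulls. rewrite !bern_expect_pulls_layers by auto.
  rewrite <- sumR_const, <- sumR_plus. apply sumR_le. intros k _.
  pose proof (bern_expect_bump_test_le j (pulls_gt j (pulls j h) k) L t h) as Hk.
  unfold fair_pulls in Hk. rewrite bern_expect_pulls_layers in Hk by auto.
  cut (forall t' h', pulls_gt j (pulls j h) k t' h' = 0 \/ pulls_gt j (pulls j h) k t' h' = 1);
    [intros H01; specialize (Hk H01); lra|].
  intros. unfold pulls_gt. destruct (Nat.ltb _ _); auto.
Qed.

(* Under the fair environment the pulls of the [K] arms share the [L] periods; Cauchy-Schwarz
   then bounds the sum of the square roots. *)
Lemma sumR_bern_expect_bump_pulls_le L t h :
  sumR K (fun j => bern_expect K pol (bump_means eps j) (fun _ a => indic j a) (fun _ _ => 0) L t h)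
  <= INR L + INR L * sqrt (kl_fair eps / 2) * sqrt (INR K * INR L).
Proof.
  assert (Hfair : forall t a, 0 <= fair_means t a <= 1) by (intros; unfold fair_means; lra).
  assert (Hpulls_nonneg : forall j, 0 <= fair_pulls j L t h).
  { intros j. apply bern_expect_nonneg; auto; intros; [unfold indic; destruct (Nat.eqb _ _)|]; lra. }
  assert (Hsum : sumR K (fun j => fair_pulls j L t h) = INR L).
  { unfold fair_pulls. rewrite <- bern_expect_sum.
    rewrite (bern_expect_ext K pol fair_means _ (fun _ _ => 1) _ (fun _ _ => 0))
      by (intros; first [apply sumR_indic; auto|rewrite sumR_const; ring]).
    rewrite bern_expect_const by auto. ring. }
  eapply Rle_trans; [apply sumR_le; intros j _; apply bern_expect_bump_pulls_le|].
  rewrite sumR_plus, Hsum, sumR_scal, Rmult_assoc.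
  apply Rplus_le_compat_l, Rmult_le_compat_l; [apply pos_INR|].
  rewrite (sumR_ext _ _ (fun j => sqrt (kl_fair eps / 2) * sqrt (fair_pulls j L t h))).
  - rewrite sumR_scal, <- Hsum. apply Rmult_le_compat_l; [apply sqrt_pos|].
    apply sumR_sqrt_le. auto.
  - intros j _. rewrite <- sqrt_mult by (auto; pose proof (kl_fair_nonneg eps Heps); lra).
    f_equal. field.
Qed.

End BumpedArm.

(** * Averaging over assignments *)

Definition scons (j : nat) (J : nat -> nat) : nat -> nat :=
  fun i => match i with O => j | S i' => J i' end.

Definition assign_upd (J : nat -> nat) (b j : nat) : nat -> nat :=
  fun i => if Nat.eqb i b then j else J i.

(* Sum of [Phi J] over the [K ^ n] assignments [J] of arms [< K] to the indices [< n]
   (the values of [J] beyond [n] are fixed to [0]). *)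
Fixpoint sum_assign (K n : nat) (Phi : (nat -> nat) -> R) : R :=
  match n with
  | O => Phi (fun _ => O)
  | S n' => sumR K (fun j => sum_assign K n' (fun J => Phi (scons j J)))
  end.

Lemma sum_assign_lin K n Phi1 Phi2 x y :
  sum_assign K n (fun J => x * Phi1 J + y * Phi2 J) = x * sum_assign K n Phi1 + y * sum_assign K n Phi2.
Proof.
  revert Phi1 Phi2; induction n; intros; simpl; auto.
  rewrite <- !sumR_scal, <- sumR_plus. apply sumR_ext; intros. apply IHn.
Qed.

Lemma sum_assign_mono K n Phi1 Phi2 : (forall J, Phi1 J <= Phi2 J) ->
  sum_assign K n Phi1 <= sum_assign K n Phi2.
Proof. revert Phi1 Phi2; induction n; intros Phi1 Phi2 H; simpl; auto. apply sumR_le; auto. Qed.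

Lemma sum_assign_ext K n Phi1 Phi2 : (forall J, Phi1 J = Phi2 J) ->
  sum_assign K n Phi1 = sum_assign K n Phi2.
Proof. intros H. apply Rle_antisym; apply sum_assign_mono; intros; rewrite H; lra. Qed.

Lemma sum_assign_const K n c : sum_assign K n (fun _ => c) = INR K ^ n * c.
Proof. induction n; simpl; [ring|]. rewrite IHn, sumR_const. ring. Qed.

Lemma sum_assign_sumR K n m (Phi : nat -> (nat -> nat) -> R) :
  sum_assign K n (fun J => sumR m (fun b => Phi b J)) = sumR m (fun b => sum_assign K n (Phi b)).
Proof.
  induction m; simpl; [rewrite sum_assign_const; ring|].
  rewrite <- IHm, <- (Rmult_1_l (sum_assign K n (fun J => sumR m _))),
    <- (Rmult_1_l (sum_assign K n (Phi m))), <- sum_assign_lin.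
  apply sum_assign_ext; intros; ring.
Qed.

Lemma sum_assign_le_coord K n b Phi U : (b < n)%nat ->
  (forall J, sumR K (fun j => Phi (assign_upd J b j)) <= U) ->
  sum_assign K n Phi <= INR K ^ (n - 1) * U.
Proof.
  revert b Phi; induction n; intros b Phi Hb H; [lia|].
  destruct b; simpl sum_assign.
  - rewrite <- sum_assign_sumR. replace (S n - 1)%nat with n by lia.
    rewrite <- sum_assign_const. apply sum_assign_mono. intros J.
    eapply Rle_trans; [|apply (H (scons 0 J))]. right. apply sumR_ext. intros j _. f_equal.
    apply functional_extensionality. intros [|i]; reflexivity.
  - destruct n; [lia|].
    eapply Rle_trans; [apply sumR_le; intros j _; apply (IHn b); [lia|]|].
    + intros J. eapply Rle_trans; [|apply (H (scons j J))]. right. apply sumR_ext. intros i _.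
      f_equal. apply functional_extensionality. intros [|i']; unfold assign_upd; simpl; auto.
    + rewrite sumR_const. replace (S (S n) - 1)%nat with (S n) by lia.
      replace (S n - 1)%nat with n by lia. simpl pow. right; ring.
Qed.

Lemma exists_assign_le_mean K n Phi : (1 <= K)%nat ->
  exists J, (forall i, (J i < K)%nat) /\ INR K ^ n * Phi J <= sum_assign K n Phi.
Proof.
  intros HK. revert Phi; induction n; intros Phi.
  - exists (fun _ => O). split; [intros; lia|simpl; lra].
  - simpl sum_assign.
    destruct (exists_le_mean K (fun j => sum_assign K n (fun J => Phi (scons j J))) HK) as [j [Hj Hle]].
    destruct (IHn (fun J => Phi (scons j J))) as [J [HJ HJle]].
    exists (scons j J). split; [intros [|i]; simpl; auto|].
    simpl pow. eapply Rle_trans; [|apply Hle].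
    rewrite Rmult_assoc. apply Rmult_le_compat_l; [apply pos_INR|auto].
Qed.

(** * The hard instances *)

Definition block (L t : nat) : nat := ((t - 1) / L)%nat.

Definition in_block (L : nat) (J : nat -> nat) (b t a : nat) : R :=
  if Nat.eqb (block L t) b then indic (J b) a else 0.

Definition hard_means (L B : nat) (eps : R) (J : nat -> nat) (t a : nat) : R :=
  1/2 + eps * sumR B (fun b => in_block L J b t a).

Lemma sumR_in_block L J B t a :
  sumR B (fun b => in_block L J b t a) = if Nat.ltb (block L t) B then indic (J (block L t)) a else 0.
Proof. apply (sumR_sel B (block L t) (fun b => indic (J b) a)). Qed.

Lemma sumR_in_block_unit L J B t a : 0 <= sumR B (fun b => in_block L J b t a) <= 1.
Proof.
  rewrite sumR_in_block.
  destruct (Nat.ltb _ _); [destruct (indic_01 (J (block L t)) a) as [-> | ->]|]; lra.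
Qed.

Lemma hard_means_unit L B eps J t a : 0 <= eps <= 1/4 -> 0 <= hard_means L B eps J t a <= 1.
Proof. intros He. unfold hard_means. pose proof (sumR_in_block_unit L J B t a). nra. Qed.

Lemma block_eq L b t : (1 <= L)%nat -> (1 + b * L <= t < 1 + b * L + L)%nat -> block L t = b.
Proof. intros HL Ht. unfold block. symmetry. apply (Nat.div_unique _ _ _ (t - 1 - b * L)); nia. Qed.

Lemma block_lt L b t : (1 <= L)%nat -> (1 <= t < 1 + b * L)%nat -> (block L t < b)%nat.
Proof. intros HL Ht. unfold block. apply Nat.Div0.div_lt_upper_bound. nia. Qed.

Lemma block_gt L b t : (1 <= L)%nat -> (1 + b * L + L <= t)%nat -> (b < block L t)%nat.
Proof. intros HL Ht. unfold block. apply Nat.div_le_lower_bound; nia. Qed.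

Lemma hard_means_block L B eps J b t a : (1 <= L)%nat -> (b < B)%nat ->
  (1 + b * L <= t < 1 + b * L + L)%nat -> hard_means L B eps J t a = bump_means eps (J b) t a.
Proof.
  intros HL Hb Ht. unfold hard_means, bump_means. rewrite sumR_in_block, (block_eq L b t) by auto.
  destruct (Nat.ltb_spec b B); [reflexivity|lia].
Qed.

Section HardInstance.

Variables (K : nat) (pol : policy).
Hypothesis Hpol : is_policy K pol.
Variables (T L B : nat) (eps : R).
Hypotheses (HL : (1 <= L)%nat) (HBL : (B * L <= T)%nat) (Heps : 0 <= eps <= 1/4).

(* Expected number of pulls of the good arm of block [b]. *)
Definition block_pulls (b : nat) (J : nat -> nat) : R :=
  bern_expect K pol (hard_means L B eps J) (in_block L J b) (fun _ _ => 0) T 1 nil.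

(* Reassigning the good arm of block [b] changes neither the past nor the counted pulls
   outside block [b], so block [b] is played against the bumped environment of that arm. *)
Lemma block_pulls_upd b J j : (b < B)%nat ->
  block_pulls b (assign_upd J b j) =
  bern_expect K pol (hard_means L B eps J) (fun _ _ => 0)
    (fun t h => bern_expect K pol (bump_means eps j) (fun _ a => indic j a) (fun _ _ => 0) L t h)
    (b * L) 1 nil.
Proof.
  intros Hb. set (J' := assign_upd J b j). unfold block_pulls.
  replace T with (b * L + (L + (T - b * L - L)))%nat by nia.
  rewrite bern_expect_split. apply bern_expect_ext_range.
  - intros t a Ht Ha. pose proof (block_lt L b t HL ltac:(lia)) as Hbt. split.
    + unfold hard_means. do 2 f_equal. apply sumR_ext. intros b' _. unfold in_block, J', assign_upd.
      destruct (Nat.eqb_spec (block L t) b'), (Nat.eqb_spec b' b); auto; lia.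
    + unfold in_block. destruct (Nat.eqb_spec (block L t) b); auto; lia.
  - intros s Hs. rewrite bern_expect_split. apply bern_expect_ext_range.
    + intros t a Ht Ha. rewrite !hard_means_block with (b := b) by (auto; lia).
      unfold in_block, J', assign_upd. rewrite (block_eq L b t), !Nat.eqb_refl by (auto; lia).
      auto.
    + intros s' Hs'. etransitivity; [|apply (bern_expect_zero K pol (hard_means L B eps J'))].
      apply bern_expect_ext_range; [|auto].
      intros t a Ht Ha. split; auto. unfold in_block.
      destruct (Nat.eqb_spec (block L t) b); auto. pose proof (block_gt L b t HL ltac:(lia)). lia.
Qed.

Lemma sumR_block_pulls_upd_le b J : (b < B)%nat ->
  sumR K (fun j => block_pulls b (assign_upd J b j)) <=
  INR L + INR L * sqrt (kl_fair eps / 2) * sqrt (INR K * INR L).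
Proof.
  intros Hb. rewrite (sumR_ext _ _ _ (fun j _ => block_pulls_upd b J j Hb)).
  rewrite <- (bern_expect_sum K pol (hard_means L B eps J) K (fun _ _ _ => 0)).
  set (U := INR L + INR L * sqrt (kl_fair eps / 2) * sqrt (INR K * INR L)).
  apply Rle_trans with
    (bern_expect K pol (hard_means L B eps J) (fun _ _ => 0) (fun _ _ => U) (b * L) 1 nil).
  - apply bern_expect_mono; auto.
    + intros; apply hard_means_unit; auto.
    + intros. rewrite sumR_const. lra.
    + intros s _. apply sumR_bern_expect_bump_pulls_le; auto.
  - rewrite bern_expect_const by auto. lra.
Qed.

End HardInstance.

Lemma exp_reward_hard_means K pol T L B eps J : is_policy K pol ->
  exp_reward K pol (hard_means L B eps J) (fun t a => bern_dist (hard_means L B eps J t a)) T 1 nil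
  = INR T / 2 + eps * sumR B (fun b => block_pulls K pol T L B eps b J).
Proof.
  intros Hpol. rewrite exp_reward_bern.
  rewrite (bern_expect_ext K pol _ _ (fun t a => (1/2) * 1 + eps * sumR B (fun b => in_block L J b t a)) _
     (fun t h => (1/2) * 0 + eps * sumR B (fun b => 0)))
    by (intros; first [unfold hard_means; ring|rewrite sumR_const; ring]).
  rewrite bern_expect_lin, bern_expect_const, bern_expect_sum by auto. unfold block_pulls. field.
Qed.

Lemma env_ok_bern T K mu : (forall t k, 0 <= mu t k <= 1) ->
  env_ok T K mu (fun t a => bern_dist (mu t a)).
Proof.
  intros Hm t k _ _. specialize (Hm t k).
  unfold dist_ok, dist_mass, dist_mean, bern_dist; simpl. split; [auto|split; [split|]].
  - repeat (apply Forall_cons; [simpl; lra|]). apply Forall_nil.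
  - ring.
  - ring.
Qed.

(* The means only move at the [(T - 1) / L] block boundaries, by at most [eps]. *)
Lemma variation_hard_means T K L B eps J : (1 <= K)%nat -> (1 <= L)%nat -> 0 <= eps ->
  variation T K (hard_means L B eps J) <= eps * INR ((T - 1) / L).
Proof.
  intros HK HL He. unfold variation.
  eapply Rle_trans; [apply sumR_le with (g := fun i => eps * (INR (S i / L) - INR (i / L)))|].
  - intros i _. apply maxK_le; auto. intros k _. unfold hard_means.
    pose proof (sumR_in_block_unit L J B (S i) k) as Hx.
    pose proof (sumR_in_block_unit L J B (S (S i)) k) as Hy.
    assert (Hstep : (S i / L = i / L)%nat \/ (S i / L = i / L + 1)%nat).
    { assert (i / L <= S i / L)%nat by (apply Nat.Div0.div_le_mono; lia).
      assert (Hup : (S i / L <= (i + 1 * L) / L)%nat) by (apply Nat.Div0.div_le_mono; lia).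
      rewrite Nat.div_add in Hup by lia. lia. }
    destruct Hstep as [Hsame | ->].
    + assert (Hblk : block L (S (S i)) = block L (S i)).
      { unfold block. replace (S (S i) - 1)%nat with (S i) by lia.
        replace (S i - 1)%nat with i by lia. auto. }
      unfold in_block. rewrite Hblk, Hsame.
      match goal with |- Rabs ?d <= ?e => replace d with 0 by ring; replace e with 0 by ring end.
      rewrite Rabs_R0. lra.
    + rewrite plus_INR. simpl INR.
      set (x := sumR B (fun b => in_block L J b (S i) k)) in *.
      set (y := sumR B (fun b => in_block L J b (S (S i)) k)) in *.
      replace (1 / 2 + eps * x - (1 / 2 + eps * y)) with (eps * (x - y)) by ring.
      rewrite Rabs_mult, (Rabs_pos_eq eps) by lra.
      assert (Rabs (x - y) <= 1) by (apply Rabs_le; lra). nra.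
  - rewrite sumR_scal, (sumR_telescope (T - 1) (fun i => INR (i / L))), Nat.Div0.div_0_l. simpl. lra.
Qed.

Lemma div_window j i W m : (1 <= W)%nat -> (1 <= m)%nat -> (i < W)%nat ->
  ((j * W + i) / (m * W) = j / m)%nat.
Proof.
  intros HW Hm Hi. rewrite (Nat.mul_comm m W), <- Nat.Div0.div_div. f_equal.
  symmetry. apply (Nat.div_unique _ _ _ i); lia.
Qed.

(* Blocks are unions of [m] windows; in each of the first [B m] windows the good arm of the
   block earns [1/2 + eps] per period. *)
Lemma window_benchmark_hard_means T K W m B eps J : (1 <= W)%nat -> (1 <= m)%nat -> Nat.divide W T ->
  (B * (m * W) <= T)%nat -> (forall i, (J i < K)%nat) -> 0 <= eps ->
  INR T / 2 + eps * INR (B * (m * W)) <= window_benchmark T K W (hard_means (m * W) B eps J).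
Proof.
  intros HW Hm [z ->] HBT HJ He. unfold window_benchmark. rewrite Nat.div_mul by lia.
  apply Rle_trans with
    (sumR z (fun j => INR W * (1/2 + eps * (if Nat.ltb j (m * B) then 1 else 0)))).
  - rewrite (sumR_ext _ _ (fun j => INR W / 2 + (eps * INR W) * (if Nat.ltb j (m * B) then 1 else 0)))
      by (intros; field).
    rewrite sumR_plus, sumR_const, sumR_scal, <- INR_sumR_ltb by nia.
    rewrite !mult_INR. right; field.
  - apply sumR_le. intros j Hj.
    eapply Rle_trans; [|apply (maxK_ge K (fun k => sumR W (fun i =>
      hard_means (m * W) B eps J (j * W + i + 1) k)) (J (j / m)%nat)); auto]. cbv beta.
    rewrite (sumR_ext _ _ (fun _ => 1/2 + eps * (if Nat.ltb j (m * B) then 1 else 0)));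
      [rewrite sumR_const; lra|].
    intros i Hi. unfold hard_means. rewrite sumR_in_block. unfold block.
    replace (j * W + i + 1 - 1)%nat with (j * W + i)%nat by lia. rewrite div_window by auto.
    pose proof (Nat.div_mod j m ltac:(lia)). pose proof (Nat.mod_upper_bound j m ltac:(lia)).
    destruct (Nat.ltb_spec (j / m) B), (Nat.ltb_spec j (m * B)); try nia.
    + unfold indic. rewrite Nat.eqb_refl. reflexivity.
    + reflexivity.
Qed.

Lemma Lub_Rbar_ge (E : R -> Prop) r : E r -> Rbar_le (Finite r) (Lub_Rbar E).
Proof. intros H. apply (proj1 (Lub_Rbar_correct E)). auto. Qed.

Lemma pulls_budget_le K L eps : (2 <= K)%nat -> 0 <= eps <= 1/4 -> 16 * eps ^ 2 * INR L <= INR K ->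
  INR L + INR L * sqrt (kl_fair eps / 2) * sqrt (INR K * INR L) <=
  INR K * INR L * (1 + sqrt (ln (4/3))) / 2.
Proof.
  intros HK He HeL.
  assert (HK2 : 2 <= INR K) by (apply (le_INR 2); auto).
  pose proof (pos_INR L) as HL. pose proof (kl_fair_nonneg eps He). pose proof (kl_fair_le eps He).
  pose proof ln_4_3_pos.
  assert (Hroot : sqrt (kl_fair eps / 2) * sqrt (INR K * INR L) <= INR K * sqrt (ln (4/3)) / 2).
  { rewrite <- sqrt_mult by (try apply Rmult_le_pos; lra).
    replace (INR K * sqrt (ln (4/3)) / 2) with (sqrt ((INR K / 2) ^ 2 * ln (4/3)))
      by (rewrite sqrt_mult, sqrt_pow2 by (try apply pow2_ge_0; lra); field).
    apply sqrt_le_1_alt.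
    apply Rle_trans with (4 * ln (4/3) * eps ^ 2 * INR L * INR K).
    2: { assert (HKL : 16 * eps ^ 2 * INR L * INR K <= INR K * INR K)
           by (apply Rmult_le_compat_r; lra).
         pose proof (Rmult_le_compat_l (ln (4/3)) _ _ ltac:(lra) HKL). lra. }
    replace (kl_fair eps / 2 * (INR K * INR L)) with (kl_fair eps * INR L * INR K / 2) by field.
    assert (0 <= INR L * INR K) by nra. nra. }
  assert (INR L <= INR K * INR L / 2) by nra.
  assert (INR L * (sqrt (kl_fair eps / 2) * sqrt (INR K * INR L)) <=
          INR L * (INR K * sqrt (ln (4/3)) / 2)) by (apply Rmult_le_compat_l; auto).
  lra.
Qed.

Lemma worst_regret_ge_blocks T K W V pol m B eps : is_policy K pol -> (2 <= K)%nat ->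
  (1 <= W)%nat -> Nat.divide W T -> (1 <= m)%nat -> (1 <= B)%nat -> (B * (m * W) <= T)%nat ->
  0 <= eps <= 1/4 -> 16 * eps ^ 2 * INR (m * W) <= INR K -> eps * INR ((T - 1) / (m * W)) <= V ->
  Rbar_le (Finite (eps * INR (B * (m * W)) * (1 - sqrt (ln (4/3))) / 2)) (worst_regret T K W V pol).
Proof.
  intros Hpol HK HW HWT Hm HB HBT He HeL HV.
  set (L := (m * W)%nat). assert (HL : (1 <= L)%nat) by (unfold L; nia).
  set (U := INR L + INR L * sqrt (kl_fair eps / 2) * sqrt (INR K * INR L)).
  set (Phi := fun J => sumR B (fun b => block_pulls K pol T L B eps b J)).
  assert (Havg : sum_assign K B Phi <= INR B * (INR K ^ (B - 1) * U)).
  { unfold Phi. rewrite sum_assign_sumR, <- sumR_const. apply sumR_le. intros b Hb.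
    apply sum_assign_le_coord with (b := b); auto. intros J.
    apply sumR_block_pulls_upd_le; auto. }
  destruct (exists_assign_le_mean K B Phi ltac:(lia)) as [J [HJ HJle]].
  assert (HKpos : 0 < INR K) by (apply lt_0_INR; lia).
  assert (HPhi : INR K * Phi J <= INR B * U).
  { apply Rmult_le_reg_l with (INR K ^ (B - 1)); [apply pow_lt; auto|].
    replace (INR K ^ (B - 1) * (INR K * Phi J)) with (INR K ^ B * Phi J)
      by (replace B with (S (B - 1)) at 1 by lia; simpl; ring).
    replace (INR K ^ (B - 1) * (INR B * U)) with (INR B * (INR K ^ (B - 1) * U)) by ring.
    lra. }
  eapply Rbar_le_trans; [|apply Lub_Rbar_ge].
  2: { exists (hard_means L B eps J), (fun t a => bern_dist (hard_means L B eps J t a)).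
       split; [apply env_ok_bern; intros; apply hard_means_unit; auto|].
       split; [eapply Rle_trans; [apply variation_hard_means; lia || lra|]; auto|reflexivity]. }
  assert (HPhi' : eps * Phi J <= eps * (INR B * INR L * (1 + sqrt (ln (4/3))) / 2)).
  { apply Rmult_le_compat_l; [lra|]. apply Rmult_le_reg_l with (INR K); auto.
    eapply Rle_trans; [apply HPhi|].
    pose proof (pulls_budget_le K L eps HK He HeL) as Hbudget. fold U in Hbudget.
    pose proof (pos_INR B). nra. }
  simpl. unfold regret. rewrite exp_reward_hard_means by auto.
  change (sumR B (fun b => block_pulls K pol T L B eps b J)) with (Phi J).
  pose proof (window_benchmark_hard_means T K W m B eps J HW Hm HWT HBT HJ ltac:(lra)) as Hbench.
  fold L in Hbench. rewrite mult_INR in *. lra.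
Qed.

(** * Choice of parameters *)

Lemma pow3_lt a b : 0 <= a -> a < b -> a ^ 3 < b ^ 3.
Proof.
  intros Ha Hab. replace (b ^ 3) with (a ^ 3 + (b - a) * (a ^ 2 + a * b + b ^ 2)) by ring.
  assert (0 < (b - a) * (a ^ 2 + a * b + b ^ 2)) by (apply Rmult_lt_0_compat; nra). lra.
Qed.

Lemma pow3_le_reg a b : 0 <= b -> a ^ 3 <= b ^ 3 -> a <= b.
Proof.
  intros Hb H. apply Rnot_lt_le. intros Hba. pose proof (pow3_lt b a Hb Hba). lra.
Qed.

Lemma pow3_inj a b : 0 <= a -> 0 <= b -> a ^ 3 = b ^ 3 -> a = b.
Proof. intros Ha Hb H. apply Rle_antisym; apply pow3_le_reg; auto; lra. Qed.

Lemma Rpower_pow3 x y : 0 < x -> Rpower x y ^ 3 = Rpower x (3 * y).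
Proof. intros Hx. rewrite <- Rpower_pow by apply exp_pos. rewrite Rpower_mult. f_equal. simpl. ring. Qed.

Lemma Rpower_third_pow3 x : 0 < x -> Rpower x (1/3) ^ 3 = x.
Proof.
  intros Hx. rewrite Rpower_pow3 by auto. replace (3 * (1/3)) with 1 by field. apply Rpower_1; auto.
Qed.

Lemma Rpower_two_thirds_pow3 x : 0 < x -> Rpower x (2/3) ^ 3 = x ^ 2.
Proof.
  intros Hx. rewrite Rpower_pow3 by auto. replace (3 * (2/3)) with (INR 2) by (simpl; field).
  apply Rpower_pow; auto.
Qed.

Lemma Rpower_third_two_thirds_pow3 x y : 0 < x -> 0 < y ->
  (Rpower x (1/3) * Rpower y (2/3)) ^ 3 = x * y ^ 2.
Proof. intros Hx Hy. rewrite Rpow_mult_distr, Rpower_third_pow3, Rpower_two_thirds_pow3; auto. Qed.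

Lemma Rpower_third_two_thirds x y : 0 < x -> 0 < y ->
  Rpower x (1/3) * Rpower y (2/3) = Rpower (x / y) (1/3) * y.
Proof.
  intros Hx Hy. assert (0 < Rpower (x / y) (1/3)) by apply exp_pos.
  apply pow3_inj; [apply Rmult_le_pos; left; apply exp_pos|nra|].
  rewrite Rpower_third_two_thirds_pow3, Rpow_mult_distr, Rpower_third_pow3
    by (try apply Rdiv_lt_0_compat; auto).
  field. lra.
Qed.

Lemma exists_block_partition T W Ws : (1 <= W)%nat -> Nat.divide W T -> (1 <= T)%nat -> INR W <= Ws ->
  exists m B, (1 <= m)%nat /\ (1 <= B)%nat /\ (B * (m * W) <= T)%nat /\ INR (m * W) <= Ws /\
    INR T < 2 * INR (B * (m * W)) /\ ((m * W)%nat = T \/ Ws < 2 * INR (m * W)).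
Proof.
  intros HW [z Hz] HT HWs. pose proof (lt_0_INR T ltac:(lia)) as HTr.
  destruct (Rle_dec (INR T) Ws) as [HTWs|HTWs].
  - exists z, 1%nat. rewrite Nat.mul_1_l, <- Hz.
    repeat split; auto; try nia; lra.
  - assert (HWr : 0 < INR W) by (apply lt_0_INR; lia).
    destruct (nfloor_ex (Ws / INR W) ltac:(apply Rdiv_le_0_compat; lra)) as [m [Hm1 Hm2]].
    apply Rmult_le_compat_r with (r := INR W) in Hm1; [|lra].
    apply Rmult_lt_compat_r with (r := INR W) in Hm2; [|lra].
    replace (Ws / INR W * INR W) with Ws in Hm1, Hm2 by (field; lra).
    assert (Hm : (1 <= m)%nat) by (destruct m; [simpl in Hm2; lra|lia]).
    assert (HmW : INR W <= INR m * INR W) by (pose proof (le_INR 1 m Hm) as Hm1r; simpl in Hm1r; nra).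
    set (L := (m * W)%nat). assert (HLr : INR L = INR m * INR W) by apply mult_INR.
    assert (HLT : (L < T)%nat) by (apply INR_lt; lra).
    exists m, (T / L)%nat.
    pose proof (Nat.div_mod T L ltac:(lia)). pose proof (Nat.mod_upper_bound T L ltac:(lia)).
    assert (HB : (1 <= T / L)%nat) by (apply Nat.div_le_lower_bound; lia).
    assert (HTB : (T < 2 * (T / L * L))%nat) by nia.
    apply lt_INR in HTB. rewrite mult_INR in HTB. simpl INR in HTB.
    repeat split; auto; try (fold L; lra).
    rewrite Nat.mul_comm. apply Nat.Div0.mul_div_le.
Qed.

(* Blocks of length about [min (Ws, T)] with gap [eps = Y / 6]. *)
Lemma worst_regret_ge_small_window T K W V pol Ws Y : is_policy K pol -> (2 <= K)%nat ->
  (1 <= W)%nat -> Nat.divide W T -> 0 < V -> INR K <= INR T / V -> 0 < Y -> 0 < Ws -> INR W <= Ws ->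
  Y ^ 3 = INR K * V / INR T -> Ws ^ 3 = INR K * (INR T / V) ^ 2 ->
  Rbar_le (Finite ((1/8 - sqrt (ln (4/3)) / 8) / 3 * (Y * INR T))) (worst_regret T K W V pol).
Proof.
  intros Hpol HK HW HWT HV HKTV HY HWs HWWs HY3 HWs3.
  assert (HKr : 2 <= INR K) by (apply (le_INR 2); auto).
  assert (HTr : 0 < INR T).
  { replace (INR T) with (INR T / V * V) by (field; lra). apply Rmult_lt_0_compat; lra. }
  assert (HT : (1 <= T)%nat) by (destruct T; [simpl in HTr; lra|lia]).
  assert (HY1 : Y <= 1).
  { apply pow3_le_reg; [lra|]. rewrite HY3, pow1.
    apply Rmult_le_reg_r with (INR T / (INR K * V)); [apply Rdiv_lt_0_compat; nra|].
    replace (INR K * V / INR T * (INR T / (INR K * V))) with 1 by (field; lra).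
    replace (1 * (INR T / (INR K * V))) with (INR T / V / INR K) by (field; lra).
    apply Rmult_le_reg_r with (INR K); [lra|].
    replace (INR T / V / INR K * INR K) with (INR T / V) by (field; lra). lra. }
  assert (HYWs : Y ^ 2 * Ws = INR K).
  { apply pow3_inj; [nra|lra|]. replace ((Y ^ 2 * Ws) ^ 3) with ((Y ^ 3) ^ 2 * Ws ^ 3) by ring.
    rewrite HY3, HWs3. field. lra. }
  assert (HYT : Y * INR T = V * Ws).
  { apply pow3_inj; [nra|nra|]. rewrite !Rpow_mult_distr, HY3, HWs3. field. lra. }
  destruct (exists_block_partition T W Ws HW HWT HT HWWs)
    as [m [B [Hm [HB [HBT [HLWs [HTB Hcase]]]]]]].
  assert (HL : 0 < INR (m * W)) by (apply lt_0_INR; nia).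
  eapply Rbar_le_trans; [|apply (worst_regret_ge_blocks T K W V pol m B (Y / 6)); auto; try lra].
  - simpl. pose proof sqrt_ln_4_3_le_1.
    assert (Y * INR T <= 2 * (Y * INR (B * (m * W)))) by nra.
    assert (0 <= 1 - sqrt (ln (4/3))) by lra. nra.
  - assert (Y ^ 2 * INR (m * W) <= Y ^ 2 * Ws) by (apply Rmult_le_compat_l; nra). nra.
  - destruct Hcase as [HLT|HWsL].
    + rewrite HLT, Nat.div_small by lia. simpl. lra.
    + assert (Hdiv : INR ((T - 1) / (m * W)) * INR (m * W) <= INR T).
      { rewrite <- mult_INR. apply le_INR.
        rewrite Nat.mul_comm. apply Nat.le_trans with (T - 1)%nat; [apply Nat.Div0.mul_div_le|lia]. }
      apply Rmult_le_reg_r with (6 * INR (m * W)); [lra|].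
      assert (0 <= INR ((T - 1) / (m * W))) by apply pos_INR.
      replace (Y / 6 * INR ((T - 1) / (m * W)) * (6 * INR (m * W)))
        with (Y * (INR ((T - 1) / (m * W)) * INR (m * W))) by field.
      apply Rle_trans with (Y * INR T); [apply Rmult_le_compat_l; lra|]. nra.
Qed.

(* One block per window with gap [eps = sqrt (K / W) / 4]. *)
Lemma worst_regret_ge_large_window T K W V pol : is_policy K pol -> (2 <= K)%nat -> 0 < V ->
  INR K <= INR T / V -> (1 <= W)%nat -> Nat.divide W T -> INR K * (INR T / V) ^ 2 <= INR W ^ 3 ->
  Rbar_le (Finite ((1/8 - sqrt (ln (4/3)) / 8) * INR T * sqrt (INR K / INR W)))
    (worst_regret T K W V pol).
Proof.
  intros Hpol HK HV HKTV HW [z Hz] HW3.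
  assert (HKr : 2 <= INR K) by (apply (le_INR 2); auto).
  assert (HWr : 1 <= INR W) by (apply (le_INR 1); auto).
  assert (HTz : INR T = INR z * INR W) by (rewrite Hz; apply mult_INR).
  assert (HKW : INR K <= INR W).
  { apply pow3_le_reg; [lra|]. eapply Rle_trans; [|apply HW3].
    replace (INR K ^ 3) with (INR K * INR K ^ 2) by ring.
    apply Rmult_le_compat_l; [lra|apply pow_incr; lra]. }
  set (eps := 1/4 * sqrt (INR K / INR W)).
  assert (He2 : eps ^ 2 = INR K / (16 * INR W)).
  { unfold eps. rewrite Rpow_mult_distr, pow2_sqrt by (apply Rdiv_le_0_compat; lra). field. lra. }
  assert (He : 0 <= eps <= 1/4).
  { assert (sqrt (INR K / INR W) <= 1).
    { rewrite <- sqrt_1. apply sqrt_le_1_alt. apply Rmult_le_reg_r with (INR W); [lra|].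
      replace (INR K / INR W * INR W) with (INR K) by (field; lra). lra. }
    unfold eps. pose proof (sqrt_pos (INR K / INR W)). lra. }
  assert (HT : 0 < INR T).
  { replace (INR T) with (INR T / V * V) by (field; lra). apply Rmult_lt_0_compat; lra. }
  assert (Hz1 : (1 <= z)%nat) by (destruct z; [simpl in HTz; lra|lia]).
  assert (Hvar : eps * INR z <= V).
  { apply Rsqr_incr_0_var; [|lra]. unfold Rsqr.
    replace (eps * INR z * (eps * INR z)) with (eps ^ 2 * INR z ^ 2) by ring. rewrite He2.
    apply Rmult_le_reg_r with (16 * INR W ^ 3 / V ^ 2); [apply Rdiv_lt_0_compat; nra|].
    replace (INR K / (16 * INR W) * INR z ^ 2 * (16 * INR W ^ 3 / V ^ 2))
      with (INR K * (INR T / V) ^ 2) by (rewrite HTz; field; lra).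
    replace (V * V * (16 * INR W ^ 3 / V ^ 2)) with (16 * INR W ^ 3) by (field; lra).
    pose proof (pow_le (INR W) 3 ltac:(lra)). lra. }
  eapply Rbar_le_trans; [|apply (worst_regret_ge_blocks T K W V pol 1 z eps); auto; try lia].
  - rewrite Nat.mul_1_l, mult_INR, <- HTz. simpl. right. unfold eps. field.
  - exists z. auto.
  - rewrite Nat.mul_1_l, He2. right. field. lra.
  - rewrite Nat.mul_1_l.
    assert (INR ((T - 1) / W) <= INR z)
      by (apply le_INR; rewrite Hz; apply Nat.Div0.div_le_upper_bound; nia).
    apply Rle_trans with (eps * INR z); [apply Rmult_le_compat_l; lra|auto].
Qed.

Theorem corollary4p2 (T K W : nat) (V : R) :
  (2 <= K)%nat -> (K <= T)%nat -> 0 < V -> V <= INR T / INR K ->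
  (0 < W)%nat -> Nat.divide W T ->
  forall pol : policy, is_policy K pol ->
  (INR W <= Rpower (INR K) (1/3) * Rpower (INR T / V) (2/3) ->
     Rbar_le (Finite ((1/8 - sqrt (ln (4/3)) / 8) / 3 *
                      Rpower (INR K * V) (1/3) * Rpower (INR T) (2/3)))
             (worst_regret T K W V pol)) /\
  (INR W >= Rpower (INR K) (1/3) * Rpower (INR T / V) (2/3) ->
     Rbar_le (Finite ((1/8 - sqrt (ln (4/3)) / 8) * INR T * sqrt (INR K / INR W)))
             (worst_regret T K W V pol)).
Proof.
  intros HK _ HV HVT HW HWT pol Hpol.
  assert (HKr : 2 <= INR K) by (apply (le_INR 2); auto).
  assert (HKTV : INR K <= INR T / V).
  { apply Rmult_le_reg_r with (V / INR K); [apply Rdiv_lt_0_compat; lra|].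
    replace (INR K * (V / INR K)) with V by (field; lra).
    replace (INR T / V * (V / INR K)) with (INR T / INR K) by (field; lra). auto. }
  assert (HTV : 0 < INR T / V) by lra.
  assert (HT : 0 < INR T) by (replace (INR T) with (INR T / V * V) by (field; lra); nra).
  assert (HWs : 0 < Rpower (INR K) (1/3) * Rpower (INR T / V) (2/3))
    by (apply Rmult_lt_0_compat; apply exp_pos).
  pose proof (Rpower_third_two_thirds_pow3 (INR K) (INR T / V) ltac:(lra) HTV) as HWs3.
  split.
  - intros HWWs. rewrite Rmult_assoc, Rpower_third_two_thirds by (try apply Rmult_lt_0_compat; lra).
    apply worst_regret_ge_small_window with (Rpower (INR K) (1/3) * Rpower (INR T / V) (2/3));
      auto; try lia; [apply exp_pos|].
    apply Rpower_third_pow3. apply Rdiv_lt_0_compat; [apply Rmult_lt_0_compat|]; lra.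
  - intros HWWs. apply worst_regret_ge_large_window; auto.
    rewrite <- HWs3. apply pow_incr. lra.
Qed.
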